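(* Fix an integer $d\ge1$ and let $S_d=\langle a_0,\dots,a_d,s\mid s a_0 s^{-1}a_0^{-1},\ a_{i+1}a_ia_{i+1}^{-1}a_0^{-1}\ (0\le i<d)\rangle$. For $0\le i<j\le d$ and $n\ge1$ let $f_{i,j}(n)=\tfrac12\,\bigl|\mathrm{vrim}(\mathrm{Fan}(a_i^n,a_j^n))\bigr|$. Then $f_{i,j}(n)$ is a polynomial in $n$ of degree $j$; in fact \[ f_{i,j}(n)=\sum_{k=i+1}^{j}\binom{n+k-1}{n-1}. \]
   Context: Each relator of $S_d$ has the form $\lambda p\lambda^{-1}q^{-1}$ with $(\lambda,p,q)=(s,a_0,a_0)$ or $(a_{i+1},a_i,a_0)$. In the unit square of such a relator in the presentation complex, reading from a corner $B$: $\lambda$ goes from $B$ to $Q$, $p$ from $Q$ to the top corner $T$, $\lambda$ from $R$ to $T$, $q$ from $B$ to $R$; the edges $p,\lambda$ into $T$ are the top edges. The descending link is the graph on the generators in which $u,v$ are adjacent iff some relator square has top edges labeled $u$ and $v$; for $S_d$ it is the path $s - a_0 - a_1 - \cdots - a_d$, and each adjacent pair corresponds to a unique relator. For a relator $e$ put $x_e=q^{-1}\lambda$. Simple fans: $\mathrm{Fan}(a,a)$ is a single edge labeled $a$ (apex at its end), empty rims. For distinct generators $a,b$, let $a=v_0,\dots,v_k=b$ be the path in the descending link, take copies $C_i$ of the relator square with top edges $v_{i-1},v_i$, and glue the top edge $v_i$ of $C_i$ to that of $C_{i+1}$ ($1\le i<k$); the common top corner is the apex. The vertex rim is the concatenation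 of the two-letter words read along the bottom of $C_i$ from the initial vertex of its top edge $v_{i-1}$ to the initial vertex of its top edge $v_i$ (each is $q^{-1}\lambda$ or $\lambda^{-1}q$), so it has the form $a_1^{-1}b_1\cdots a_k^{-1}b_k$; the edge rim replaces $q^{-1}\lambda$ by $x_e$ and $\lambda^{-1}q$ by $x_e^{-1}$. Fans of height $n\ge2$: for positive words $u=au'$, $v=bv'$ of length $n$ with $a,b$ generators, let $F'=\mathrm{Fan}(u',v')$ with vertex rim $a_1^{-1}b_1\cdots a_k^{-1}b_k$, put $b_0=a$, $a_{k+1}=b$, and attach for $i=1,\dots,k+1$ the simple fan $\mathrm{Fan}(b_{i-1},a_i)$ with apex at the rim vertex where the edges $b_{i-1}$ and $a_i$ terminate (for $i=1$, the initial vertex of the side $u'$, the new edge $a$ extending that side; symmetrically for $i=k+1$), identifying its top edges with the corresponding edges. This is $\mathrm{Fan}(u,v)$; its vertex and edge rims are the concatenations of those of the attached simple fans. $|w|$ is the length of a word $w$. *)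

From mathcomp Require Import all_boot all_order all_algebra.
Set Implicit Arguments. Unset Strict Implicit. Unset Printing Implicit Defensive.

(* Generators of S_d:  None = s,  Some i = a_i. *)
Definition gen := option nat.
Notation gs := (@None nat).
Notation ga i := (@Some nat i).

(* A letter of a word: (generator, inverted?). *)
Definition letter := (gen * bool)%type.
Definition word := seq letter.
Definition pos (x : gen) : letter := (x, false).
Definition neg (x : gen) : letter := (x, true).

(* A relator  lambda p lambda^-1 q^-1  is recorded as the triple (lambda, p, q). *)
Definition relator := (gen * gen * gen)%type.
Definition rlam (r : relator) : gen := r.1.1.
Definition rp (r : relator) : gen := r.1.2.
Definition rq (r : relator) : gen := r.2.

Definition relator_word (r : relator) : word :=
  [:: pos (rlam r); pos (rp r); neg (rlam r); neg (rq r)].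

Definition relators (d : nat) : seq relator :=
  (gs, ga 0, ga 0) :: [seq (ga i.+1, ga i, ga 0) | i <- iota 0 d].

(* Descending link: u,v adjacent iff some relator square has top edges u,v
   (the top edges are p and lambda). *)
Definition top_edges_are (r : relator) (u v : gen) : bool :=
  ((rp r == u) && (rlam r == v)) || ((rp r == v) && (rlam r == u)).
Definition link_adj (d : nat) (u v : gen) : bool :=
  has (fun r => top_edges_are r u v) (relators d).

(* For S_d the descending link is the path s - a_0 - a_1 - ... - a_d;
   we index its vertices along the path. *)
Definition gidx (x : gen) : nat := if x is Some i then i.+1 else 0.
Definition gunidx (k : nat) : gen := if k is k'.+1 then ga k' else gs.

Definition link_path (a b : gen) : seq gen :=
  if gidx a <= gidx b then [seq gunidx k | k <- iota (gidx a) (gidx b - gidx a).+1]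
  else rev [seq gunidx k | k <- iota (gidx b) (gidx a - gidx b).+1].

Definition rel_of (d : nat) (x y : gen) : relator :=
  nth (gs, gs, gs) [seq r <- relators d | top_edges_are r x y] 0.

(* Two-letter word read along the bottom of the square of r, from the initial
   vertex of its top edge x to the initial vertex of its top edge y:
   from p to lambda it is lambda^-1 q, from lambda to p it is q^-1 lambda. *)
Definition square_word (r : relator) (x y : gen) : word :=
  if (rp r == x) && (rlam r == y) then [:: neg (rlam r); pos (rq r)]
  else [:: neg (rq r); pos (rlam r)].

Definition simple_vrim (d : nat) (a b : gen) : word :=
  let P := link_path a b in
  flatten [seq square_word (rel_of d xy.1 xy.2) xy.1 xy.2 | xy <- zip P (behead P)].

Fixpoint rim_pairs (w : word) : seq (gen * gen) :=
  match w with
  | x :: y :: t => (x.1, y.1) :: rim_pairs t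
  | _ => [::]
  end.

(* Vertex rim of Fan(u,v) for positive words u,v (given as sequences of
   generators) of the same length n >= 1. *)
Fixpoint fan_vrim (d : nat) (u v : seq gen) : word :=
  match u, v with
  | [:: a], [:: b] => simple_vrim d a b
  | a :: u', b :: v' =>
      let ps := rim_pairs (fan_vrim d u' v') in
      let bs := a :: [seq pr.2 | pr <- ps] in   (* b_0 = a, b_1, ..., b_k *)
      let as_ := rcons [seq pr.1 | pr <- ps] b in (* a_1, ..., a_k, a_{k+1} = b *)
      flatten [seq simple_vrim d xy.1 xy.2 | xy <- zip bs as_]
  | _, _ => [::]
  end.

Definition fij (d i j n : nat) : rat :=
  ((size (fan_vrim d (nseq n (ga i)) (nseq n (ga j))))%:R / 2%:R)%R.

From mathcomp Require Import all_boot all_order all_algebra zify.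
Import GRing.Theory Num.Theory.

(* Every rim of Fan(a_i^n, a_j^n) has the form a_{m_1}^-1 a_0 ... a_{m_k}^-1 a_0,
   because the relators of S_d all have q = a_0.  Growing the fan by one level
   keeps the pair a_{i+1}^-1 a_0, appends the rim a_1^-1 a_0 ... a_j^-1 a_0 of
   Fan(a_0, a_j), and replaces every other pair a_m^-1 a_0 by the rim
   a_1^-1 a_0 ... a_m^-1 a_0 of Fan(a_0, a_m).  Weighting a pair m by
   C(p + m - 1, p), the hockey-stick identity turns one such substitution into
   the shift p -> p + 1; hence the number of pairs at height n is
   sum_(q < n) sum_(i < k <= j) C(q + k - 1, q) = sum_(i < k <= j) C(n + k - 1, n - 1),
   and each summand is a polynomial of degree k in n. *)

Fixpoint rim_word (T : seq nat) : word :=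
  if T is m :: T' then neg (ga m) :: pos (ga 0) :: rim_word T' else [::].

Lemma rim_word_cat s t : rim_word (s ++ t) = rim_word s ++ rim_word t.
Proof. by elim: s => //= m s ->. Qed.

Lemma size_rim_word T : size (rim_word T) = 2 * size T.
Proof. by elim: T => //= m T ->; rewrite mulnS. Qed.

Lemma rim_pairs_rim_word T : rim_pairs (rim_word T) = [seq (ga m, ga 0) | m <- T].
Proof. by elim: T => //= m T ->. Qed.

Lemma rel_of_succ d k :
  k < d -> rel_of d (ga k) (ga k.+1) = (ga k.+1, ga k, ga 0).
Proof.
move=> lt_kd; rewrite /rel_of /relators /= filter_map.
have -> : [seq l <- iota 0 d | preim (fun l => (ga l.+1, ga l, ga 0))
            (fun r => top_edges_are r (ga k) (ga k.+1)) l] = [seq l <- iota 0 d | pred1 k l].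
  apply: eq_filter => l /=; rewrite /top_edges_are /rp /rlam /=.
  case: (eqVneq l k) => [->|ne_lk]; first by rewrite !eqxx.
  by move: ne_lk; rewrite !(inj_eq Some_inj) !eqSS; lia.
by rewrite /top_edges_are /= andbF filter_pred1_uniq ?iota_uniq ?mem_iota.
Qed.

Lemma simple_vrim_up d x y : x <= y -> y <= d ->
  simple_vrim d (ga x) (ga y) = rim_word (iota x.+1 (y - x)).
Proof.
move=> le_xy le_yd; rewrite /simple_vrim /link_path /= ltnS le_xy subSS /=.
have all_lt_d : all (fun k => k < d) (iota x (y - x)).
  by apply/allP => k; rewrite mem_iota subnKC // => /andP[_ /leq_trans]; apply.
move: (y - x) all_lt_d => n; elim: n x {le_xy} => //= n IH z /andP[lt_zd all_lt_d].
by rewrite rel_of_succ //= /square_word /rp /rlam /= !eqxx /= IH.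
Qed.

Lemma fan_vrim_consE d a a' u b b' v :
  fan_vrim d (a :: a' :: u) (b :: b' :: v) =
  let ps := rim_pairs (fan_vrim d (a' :: u) (b' :: v)) in
  flatten [seq simple_vrim d xy.1 xy.2 | xy <- zip (a :: [seq pr.2 | pr <- ps])
                                                   (rcons [seq pr.1 | pr <- ps] b)].
Proof. by []. Qed.

Lemma hockey_stick p m : \sum_(l <- iota 1 m) 'C(p + l - 1, p) = 'C(p + m, p.+1).
Proof.
elim: m => [|m IH]; first by rewrite big_nil bin_small // addn0.
rewrite -[m.+1]addn1 iotaD big_cat IH add1n big_seq1 addn1 addnS subn1.
by rewrite binS.
Qed.

Lemma hockey_stick_range p i j : i <= j ->
  \sum_(i.+1 <= k < j.+1) 'C(p + k - 1, p) + 'C(p + i, p.+1) = 'C(p + j, p.+1).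
Proof.
move=> le_ij; rewrite -!hockey_stick -(subnKC le_ij) iotaD big_cat addnC.
by rewrite /index_iota subSS addKn add1n.
Qed.

Lemma sum_diag_bin k n : \sum_(q < n.+1) 'C(q + k, q) = 'C(n.+1 + k, n).
Proof.
elim: n => [|n IH]; first by rewrite big_ord1 !bin0.
by rewrite big_ord_recr /= IH [n.+2 + k]addSn binS addnC.
Qed.

Definition weight (T : seq nat) (p : nat) : nat := \sum_(m <- T) 'C(p + m - 1, p).

Lemma weight_cat s t p : weight (s ++ t) p = weight s p + weight t p.
Proof. exact: big_cat. Qed.

Lemma weight_cons m T p : weight (m :: T) p = 'C(p + m - 1, p) + weight T p.
Proof. exact: big_cons. Qed.

Lemma weight0 T : weight T 0 = size T.
Proof. by rewrite /weight; under eq_bigr do rewrite bin0; rewrite sum1_size. Qed.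

Lemma weight_flatten_iota1 T p :
  weight (flatten [seq iota 1 m | m <- T]) p = weight T p.+1.
Proof.
elim: T => [|m T IH] /=; first by rewrite /weight !big_nil.
by rewrite weight_cat IH weight_cons {1}/weight hockey_stick addSn subn1.
Qed.

Section RimSequence.

Variables i j : nat.
Hypothesis lt_ij : i < j.

(* The indices m_1, ..., m_k of the rim of Fan(a_i^(n+1), a_j^(n+1)). *)
Fixpoint rim_seq (n : nat) : seq nat :=
  if n is n'.+1 then
    i.+1 :: flatten [seq iota 1 m | m <- behead (rim_seq n')] ++ iota 1 j
  else iota i.+1 (j - i).

Lemma rim_seq_shape n : exists2 T, rim_seq n = i.+1 :: T & all (leq^~ j) T.
Proof.
elim: n => [|n [T def_rim le_Tj]] /=.
  exists (iota i.+2 (j - i.+1)); first by rewrite -(subnSK lt_ij).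
  by apply/allP => m; rewrite mem_iota; lia.
exists (flatten [seq iota 1 m | m <- T] ++ iota 1 j); first by rewrite def_rim.
rewrite all_cat; apply/andP; split; apply/allP => k; last by rewrite mem_iota; lia.
case/flattenP => _ /mapP[m T_m ->]; rewrite mem_iota.
by have := allP le_Tj m T_m; lia.
Qed.

Definition col_sum (p : nat) : nat := \sum_(i.+1 <= k < j.+1) 'C(p + k - 1, p).

Lemma weight_rim_seqS n p :
  weight (rim_seq n.+1) p = col_sum p + weight (rim_seq n) p.+1.
Proof.
have [T def_rim _] := rim_seq_shape n.
rewrite /= def_rim /= !weight_cons weight_cat weight_flatten_iota1 {2}/weight hockey_stick.
rewrite -(@hockey_stick_range p i j (ltnW lt_ij)) -/(col_sum p).
rewrite addSn addnS !subn1 /= binS.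
lia.
Qed.

Lemma weight_rim_seq n p : weight (rim_seq n) p = \sum_(q < n.+1) col_sum (p + q).
Proof.
elim: n p => [|n IH] p.
  by rewrite big_ord1 addn0 /weight /col_sum /index_iota subSS.
rewrite weight_rim_seqS IH [RHS]big_ord_recl addn0; congr (_ + _).
by apply: eq_bigr => q _; rewrite addSnnS.
Qed.

Variable d : nat.
Hypothesis le_jd : j <= d.

Lemma fan_vrim_nseq n :
  fan_vrim d (nseq n.+1 (ga i)) (nseq n.+1 (ga j)) = rim_word (rim_seq n).
Proof.
have lt_id : i < d := leq_trans lt_ij le_jd.
elim: n => [|n IH]; first by rewrite /= simple_vrim_up // ltnW.
have [T def_rim le_Tj] := rim_seq_shape n.
rewrite [nseq _ _]/= [nseq n.+2 _]/= fan_vrim_consE IH def_rim rim_pairs_rim_word /=.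
rewrite def_rim (@simple_vrim_up d i i.+1) // subSnn /=; do 2 congr (_ :: _).
elim: T le_Tj {def_rim} => [|m T IHT] /= => [_|/andP[le_mj le_Tj]].
  by rewrite cats0 simple_vrim_up // subn0.
by rewrite simple_vrim_up ?(leq_trans le_mj) // subn0 IHT // -catA -rim_word_cat.
Qed.

End RimSequence.

Lemma fij_sum_bin d i j n : i < j -> j <= d -> 1 <= n ->
  fij d i j n = ((\sum_(i.+1 <= k < j.+1) 'C(n + k - 1, n - 1))%:R)%R.
Proof.
move=> lt_ij le_jd; case: n => // n _.
rewrite /fij fan_vrim_nseq // size_rim_word natrM mulrC mulKf ?pnatr_eq0 //.
congr (_%:R)%R; rewrite -weight0 (@weight_rim_seq i j lt_ij) exchange_big /=.
apply: eq_big_nat => -[|k] /andP[lt_ik _] //.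
rewrite subn1 addnS subn1 /= -(sum_diag_bin k n).
by apply: eq_bigr => q _; rewrite add0n addnS subn1.
Qed.

Lemma prod_rising_bin n k : \prod_(0 <= l < k) (n.+1 + l) = 'C(n + k, n) * k`!.
Proof.
rewrite big_mkord.
have -> : 'C(n + k, n) = 'C(n + k, k) by rewrite -[RHS]bin_sub ?leq_addl // addnK.
rewrite bin_ffact ffact_prod (reindex_inj rev_ord_inj) /=.
by apply: eq_bigr => l _; have := ltn_ord l; lia.
Qed.

Local Open Scope ring_scope.

Definition binpoly (k : nat) : {poly rat} :=
  (k`!%:R)^-1 *: \prod_(0 <= l < k) ('X + l%:R%:P).

Lemma size_binpoly k : size (binpoly k) = k.+1.
Proof.
rewrite size_scale ?invr_eq0 ?pnatr_eq0 -?lt0n ?fact_gt0 //.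
have -> : \prod_(0 <= l < k) ('X + (l%:R : rat)%:P) = \prod_(0 <= l < k) ('X - (- l%:R)%:P).
  by apply: eq_bigr => l _; rewrite polyCN opprK.
by rewrite size_prod_XsubC size_iota subn0.
Qed.

Lemma horner_binpoly k n : (binpoly k).[n.+1%:R] = 'C(n + k, n)%:R.
Proof.
rewrite hornerZ horner_prod.
under eq_bigr do rewrite hornerD hornerX hornerC -natrD.
by rewrite -natr_prod prod_rising_bin natrM mulrC mulfK // pnatr_eq0 -lt0n fact_gt0.
Qed.

Lemma size_sum_binpoly i j : (i < j)%N ->
  size (\sum_(i.+1 <= k < j.+1) binpoly k) = j.+1.
Proof.
move=> lt_ij; rewrite big_nat_recr //= addrC size_polyDl size_binpoly // ltnS.
rewrite big_seq; apply: (big_ind (fun q : {poly rat} => (size q <= j)%N)).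
- by rewrite size_poly0.
- by move=> p q le_pj le_qj; rewrite (leq_trans (size_polyD _ _)) // geq_max le_pj.
- by move=> k; rewrite mem_index_iota size_binpoly => /andP[].
Qed.

Theorem mainTheorem5 (d i j : nat) :
  (1 <= d)%N -> (i < j)%N -> (j <= d)%N ->
  (exists p : {poly rat}, size p = j.+1 /\
     forall n : nat, (1 <= n)%N -> p.[n%:R] = fij d i j n)%R /\
  (forall n : nat, (1 <= n)%N ->
     fij d i j n = (\sum_(i.+1 <= k < j.+1) 'C(n + k - 1, n - 1))%:R)%R.
Proof.
move=> _ lt_ij le_jd; split; last by move=> n; exact: fij_sum_bin.
exists (\sum_(i.+1 <= k < j.+1) binpoly k); split; first exact: size_sum_binpoly.
case=> // n _; rewrite fij_sum_bin // horner_sum natr_sum.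
by apply: eq_bigr => k _; rewrite horner_binpoly addSn !subn1.
Qed.
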